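(* Let $G=(X,\Sigma,\longrightarrow,X_0)$ and $R=(Z,\Sigma,\longrightarrow,Z_0)$ be automata and take $\Sigma_r=\Sigma$. There exists a $\Sigma_{uc}$-admissible supervisor $S$ with $S\|G\simeq R$ if and only if there exists a $\Sigma_{ucr}$-controllability set $E$ from $G$ to $R$ (with $\Sigma_r=\Sigma$) such that $\gamma_R(\bigcup E_0)=Z_0$, i.e. $\forall z\in Z_0\,\exists W\in E_0\,\exists x_0\in X_0\,((x_0,z)\in W)$, where $E_0=\{W\in E:\forall x\in X_0\,\exists z\in Z_0\,((x,z)\in W)\text{ and }W\subseteq X_0\times Z_0\}$ and $\gamma_R(V)=\{z\in Z:(x,z)\in V\text{ for some }x\in X\}$.
   Context: An automaton is a 4-tuple $A=(Q,\Sigma,\longrightarrow,Q_0)$ with state set $Q$, finite event set $\Sigma$, ${\longrightarrow}\subseteq Q\times\Sigma\times Q$ and $\emptyset\neq Q_0\subseteq Q$. Write $q\xrightarrow{\sigma}q'$ for $(q,\sigma,q')\in{\longrightarrow}$, $q\xrightarrow{\sigma}$ if some such $q'$ exists; extend to strings. A state is reachable if reached from an initial state by some string. Events are partitioned into uncontrollable $\Sigma_{uc}$ and controllable $\Sigma_c$; $\Sigma_r\subseteq\Sigma$ denotes the set of required events. For a supervisor $S=(Y,\Sigma,\longrightarrow,Y_0)$, $S\|G=(Y\times X,\Sigma,\longrightarrow,Y_0\times X_0)$ with $(y,x)\xrightarrow{\sigma}(y',x')$ iff $y\xrightarrow{\sigma}y'$ and $x\xrightarrow{\sigma}x'$; $S$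 is $\Sigma_{uc}$-admissible w.r.t. $G$ if for every reachable $(y,x)$ of $S\|G$ and $\sigma\in\Sigma_{uc}$, $x\xrightarrow{\sigma}$ implies $(y,x)\xrightarrow{\sigma}$. For automata $A_1,A_2$ (state sets $Q_1,Q_2$, initial sets $Q_{01},Q_{02}$), $\Phi\subseteq Q_1\times Q_2$ is a simulation if every $q_0\in Q_{01}$ has $p_0\in Q_{02}$ with $(q_0,p_0)\in\Phi$ and for all $(q,p)\in\Phi$, $\sigma\in\Sigma$, $q\xrightarrow{\sigma}q'$ there is $p'$ with $p\xrightarrow{\sigma}p'$, $(q',p')\in\Phi$. $\Phi$ is a bisimulation if both $\Phi$ and $\Phi^{-1}=\{(p,q):(q,p)\in\Phi\}$ are simulations; $A_1\simeq A_2$ means a bisimulation exists. For $W,W'\subseteq X\times Z$: $\mathit{match}_{G,R}(W,\sigma,W')$ iff for all $(x,z)\in W$ and $x\xrightarrow{\sigma}x'$ there is $z'$ with $z\xrightarrow{\sigma}z'$ and $(x',z')\in W'$. $E\subseteq\wp(X\times Z)$ is a $\Sigma_{ucr}$-controllability set from $G$ to $R$ if: (istate) some $W_0\in E$ satisfies $\forall x_0\in X_0\,\exists z_0\in Z_0\,((x_0,z_0)\in W_0)$; (a) for every $W\in E$, $\sigma\in\Sigma_{uc}$ there is $W'\in E$ with $\mathit{match}_{G,R}(W,\sigma,W')$; (b) for every $W\in E$, $(x,z)\in W$, $\sigma\in\Sigma_r$, $z\xrightarrow{\sigma}z'$, there exist $x'$, $W'\in E$ with $x\xrightarrow{\sigma}x'$,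 $(x',z')\in W'$, $\mathit{match}_{G,R}(W,\sigma,W')$. *)

From mathcomp Require Import all_boot.
Set Implicit Arguments. Unset Strict Implicit. Unset Printing Implicit Defensive.

Record automaton (Q : Type) (Sigma : finType) := Automaton {
  trans : Q -> Sigma -> Q -> Prop;
  init : Q -> Prop;
  init_nonempty : exists q, init q
}.

Section Auto.
Variable Sigma : finType.

Definition enabled (Q : Type) (A : automaton Q Sigma) (q : Q) (s : Sigma) : Prop :=
  exists q', trans A q s q'.

Inductive reachable (Q : Type) (A : automaton Q Sigma) : Q -> Prop :=
| reach_init q : init A q -> reachable A q
| reach_step q s q' : reachable A q -> trans A q s q' -> reachable A q'.

Definition sync_trans (Y X : Type) (S : automaton Y Sigma) (G : automaton X Sigma)
  (p : Y * X) (s : Sigma) (p' : Y * X) : Prop :=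
  trans S p.1 s p'.1 /\ trans G p.2 s p'.2.

Definition sync_init (Y X : Type) (S : automaton Y Sigma) (G : automaton X Sigma)
  (p : Y * X) : Prop := init S p.1 /\ init G p.2.

Lemma sync_init_nonempty (Y X : Type) (S : automaton Y Sigma) (G : automaton X Sigma) :
  exists p, sync_init S G p.
Proof.
case: (init_nonempty S) => y Hy; case: (init_nonempty G) => x Hx.
by exists (y, x); split.
Qed.

Definition sync (Y X : Type) (S : automaton Y Sigma) (G : automaton X Sigma) :
  automaton (Y * X) Sigma :=
  Automaton (sync_trans S G) (sync_init_nonempty S G).

Definition admissible (Suc : pred Sigma) (Y X : Type)
  (S : automaton Y Sigma) (G : automaton X Sigma) : Prop :=
  forall (p : Y * X) (s : Sigma), reachable (sync S G) p -> Suc s ->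
    enabled G p.2 s -> enabled (sync S G) p s.

Definition simulation (Q1 Q2 : Type) (A1 : automaton Q1 Sigma)
  (A2 : automaton Q2 Sigma) (Phi : Q1 -> Q2 -> Prop) : Prop :=
  (forall q0, init A1 q0 -> exists p0, init A2 p0 /\ Phi q0 p0) /\
  (forall q p s q', Phi q p -> trans A1 q s q' ->
     exists p', trans A2 p s p' /\ Phi q' p').

Definition bisimulation (Q1 Q2 : Type) (A1 : automaton Q1 Sigma)
  (A2 : automaton Q2 Sigma) (Phi : Q1 -> Q2 -> Prop) : Prop :=
  simulation A1 A2 Phi /\ simulation A2 A1 (fun p q => Phi q p).

Definition bisimilar (Q1 Q2 : Type) (A1 : automaton Q1 Sigma)
  (A2 : automaton Q2 Sigma) : Prop :=
  exists Phi, bisimulation A1 A2 Phi.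

Definition matchGR (X Z : Type) (G : automaton X Sigma) (R : automaton Z Sigma)
  (W : X * Z -> Prop) (s : Sigma) (W' : X * Z -> Prop) : Prop :=
  forall x z x', W (x, z) -> trans G x s x' ->
    exists z', trans R z s z' /\ W' (x', z').

Definition ctrl_set (Suc Sr : pred Sigma) (X Z : Type)
  (G : automaton X Sigma) (R : automaton Z Sigma)
  (E : (X * Z -> Prop) -> Prop) : Prop :=
  (exists W0, E W0 /\ forall x0, init G x0 -> exists z0, init R z0 /\ W0 (x0, z0)) /\
  (forall W s, E W -> Suc s -> exists W', E W' /\ matchGR G R W s W') /\
  (forall W x z s z', E W -> W (x, z) -> Sr s -> trans R z s z' ->
     exists x' W', trans G x s x' /\ E W' /\ W' (x', z') /\ matchGR G R W s W').

Definition E0 (X Z : Type) (G : automaton X Sigma) (R : automaton Z Sigma)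
  (E : (X * Z -> Prop) -> Prop) (W : X * Z -> Prop) : Prop :=
  E W /\ (forall x, init G x -> exists z, init R z /\ W (x, z)) /\
  (forall x z, W (x, z) -> init G x /\ init R z).

Definition bigcup_fam (X Z : Type) (F : (X * Z -> Prop) -> Prop) (p : X * Z) : Prop :=
  exists W, F W /\ W p.

Definition gammaR (X Z : Type) (V : X * Z -> Prop) (z : Z) : Prop :=
  exists x, V (x, z).

End Auto.

(* Forwards: the states of S || G that pair with a fixed supervisor state y,
   together with their bisimilar states of R, form one set of the
   controllability family; a transition y -s-> y' of S matches it with the set
   for y', and when S blocks an uncontrollable s at y, admissibility forces G
   to block s as well, so the set matches itself.  Backwards: the sets of E
   themselves serve as supervisor states, with W -s-> W' whenever W' matches
   W on s; membership (x, z) in W is then a bisimulation between S || G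
   and R. *)
From Stdlib Require Import Classical.
From mathcomp Require Import all_boot.

Set Implicit Arguments. Unset Strict Implicit. Unset Printing Implicit Defensive.

Lemma matchGR_blocked (Sigma : finType) (X Z : Type) (G : automaton X Sigma)
    (R : automaton Z Sigma) (W W' : X * Z -> Prop) (s : Sigma) :
  (forall x z, W (x, z) -> ~ enabled G x s) -> matchGR G R W s W'.
Proof. by move=> blocked x z x' Wxz Gxx'; case: (blocked x z Wxz); exists x'. Qed.

Lemma gammaR_E0_init (Sigma : finType) (X Z : Type) (G : automaton X Sigma)
    (R : automaton Z Sigma) (E : (X * Z -> Prop) -> Prop) (z : Z) :
  gammaR (bigcup_fam (E0 G R E)) z -> init R z.
Proof. by move=> [x [W [[_ [_ W_init]] Wxz]]]; case: (W_init x z Wxz). Qed.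

Section SupervisorToCtrlSet.

Variables (Sigma : finType) (Suc : pred Sigma) (Y X Z : Type).
Variables (S : automaton Y Sigma) (G : automaton X Sigma) (R : automaton Z Sigma).
Variable Phi : Y * X -> Z -> Prop.
Hypothesis S_adm : admissible Suc S G.
Hypothesis Phi_bisim : bisimulation (sync S G) R Phi.

Definition reach_pairs (y : Y) (p : X * Z) : Prop :=
  reachable (sync S G) (y, p.1) /\ Phi (y, p.1) p.2.

Definition init_pairs (y : Y) (p : X * Z) : Prop :=
  init S y /\ init G p.1 /\ init R p.2 /\ Phi (y, p.1) p.2.

Definition bisim_family (W : X * Z -> Prop) : Prop :=
  exists y, forall x z, W (x, z) -> reach_pairs y (x, z).

Lemma bisim_family_reach_pairs (y : Y) : bisim_family (reach_pairs y).
Proof. by exists y. Qed.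

Lemma bisim_family_init_pairs (y : Y) : bisim_family (init_pairs y).
Proof. by exists y => x z [Sy [Gx [_ Phi_yxz]]]; split=> //; apply: reach_init. Qed.

Lemma match_reach_pairs (y y' : Y) (s : Sigma) (W : X * Z -> Prop) :
  trans S y s y' -> (forall x z, W (x, z) -> reach_pairs y (x, z)) ->
  matchGR G R W s (reach_pairs y').
Proof.
move=> Syy' W_sub x z x' Wxz Gxx'.
have [reach_yx Phi_yxz] := W_sub x z Wxz.
have step : trans (sync S G) (y, x) s (y', x') by [].
have [z' [Rzz' Phi'] ] := Phi_bisim.1.2 _ _ _ _ Phi_yxz step.
by exists z'; split=> //; split=> //; apply: reach_step reach_yx step.
Qed.

Lemma admissible_blocked (y : Y) (x : X) (s : Sigma) :
  reachable (sync S G) (y, x) -> Suc s -> ~ enabled S y s -> ~ enabled G x s.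
Proof.
move=> reach_yx Suc_s S_blocked G_enabled.
have [[y' x'] [Syy' _]] := S_adm reach_yx Suc_s G_enabled.
by apply: S_blocked; exists y'.
Qed.

Lemma bisim_family_ctrl_set (Sr : pred Sigma) : ctrl_set Suc Sr G R bisim_family.
Proof.
have [[Phi_init _] [_ Phi_step']] := Phi_bisim.
split; [|split].
- have [y0 Sy0] := init_nonempty S.
  exists (init_pairs y0); split; first exact: bisim_family_init_pairs.
  move=> x0 Gx0.
  have [z0 [Rz0 Phi0]] := Phi_init (y0, x0) (conj Sy0 Gx0).
  by exists z0.
- move=> W s [y W_sub] Suc_s.
  case: (classic (enabled S y s)) => [[y' Syy']|S_blocked].
    exists (reach_pairs y'); split; first exact: bisim_family_reach_pairs.
    exact: match_reach_pairs Syy' W_sub.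
  exists W; split; first by exists y.
  apply: matchGR_blocked => x z Wxz.
  exact: admissible_blocked (W_sub x z Wxz).1 Suc_s S_blocked.
- move=> W x z s z' [y W_sub] Wxz _ Rzz'.
  have [reach_yx Phi_yxz] := W_sub x z Wxz.
  have [[y' x'] [step Phi']] := Phi_step' _ _ _ _ Phi_yxz Rzz'.
  exists x', (reach_pairs y'); split; first exact: step.2.
  split; first exact: bisim_family_reach_pairs.
  split; last exact: match_reach_pairs step.1 W_sub.
  by split=> //; apply: reach_step reach_yx step.
Qed.

Lemma init_gammaR_E0_bisim_family (z : Z) :
  init R z -> gammaR (bigcup_fam (E0 G R bisim_family)) z.
Proof.
have [[Phi_init _] [Phi_init' _]] := Phi_bisim.
move=> Rz; have [[y0 x0] [[Sy0 Gx0] Phi0]] := Phi_init' z Rz.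
exists x0, (init_pairs y0); split; last by [].
split; first exact: bisim_family_init_pairs.
split; last by move=> x z1 [_ [Gx [Rz1 _]]].
move=> x Gx; have [z1 [Rz1 Phi1]] := Phi_init (y0, x) (conj Sy0 Gx).
by exists z1.
Qed.

End SupervisorToCtrlSet.

Section CtrlSetToSupervisor.

Variables (Sigma : finType) (Suc : pred Sigma) (X Z : Type).
Variables (G : automaton X Sigma) (R : automaton Z Sigma).
Variable E : (X * Z -> Prop) -> Prop.
Hypothesis E_ctrl : ctrl_set Suc (fun _ => true) G R E.
Hypothesis E0_cover : forall z, init R z -> gammaR (bigcup_fam (E0 G R E)) z.

Definition ctrl_sup_trans (W : X * Z -> Prop) (s : Sigma) (W' : X * Z -> Prop) :
    Prop :=
  E W /\ E W' /\ matchGR G R W s W'.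

Lemma E0_nonempty : exists W, E0 G R E W.
Proof.
have [z Rz] := init_nonempty R.
by have [x [W [E0W _]]] := E0_cover Rz; exists W.
Qed.

Definition ctrl_supervisor : automaton (X * Z -> Prop) Sigma :=
  Automaton ctrl_sup_trans E0_nonempty.

Lemma reachable_ctrl_supervisor (p : (X * Z -> Prop) * X) :
  reachable (sync ctrl_supervisor G) p -> E p.1.
Proof. by elim=> [q [[]]|q s q' _ _ [[_ []]]]. Qed.

Lemma ctrl_supervisor_admissible : admissible Suc ctrl_supervisor G.
Proof.
move=> [W x] s reach_Wx Suc_s [x' Gxx'].
have EW := reachable_ctrl_supervisor reach_Wx.
have [W' [EW' match_W]] := E_ctrl.2.1 W s EW Suc_s.
by exists (W', x'); split.
Qed.

Definition ctrl_bisim (p : (X * Z -> Prop) * X) (z : Z) : Prop :=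
  E p.1 /\ p.1 (p.2, z).

Lemma ctrl_bisim_bisimulation : bisimulation (sync ctrl_supervisor G) R ctrl_bisim.
Proof.
split; split.
- move=> [W x] [[EW [W_total _]] Gx].
  by have [z [Rz Wxz]] := W_total x Gx; exists z.
- move=> [W x] z s [W' x'] [EW Wxz] [[_ [EW' match_W]] Gxx'].
  by have [z' [Rzz' W'xz']] := match_W x z x' Wxz Gxx'; exists z'.
- move=> z Rz; have [x [W [E0W Wxz]]] := E0_cover Rz.
  have [Gx _] := E0W.2.2 x z Wxz.
  by exists (W, x); split; [split | split=> //; case: E0W].
- move=> z [W x] s z' [EW Wxz] Rzz'.
  have [x' [W' [Gxx' [EW' [W'xz' match_W]]]]] := E_ctrl.2.2 W x z s z' EW Wxz isT Rzz'.
  by exists (W', x').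
Qed.

End CtrlSetToSupervisor.

Theorem corollary3 (Sigma : finType) (Suc : pred Sigma) (X Z : Type)
  (G : automaton X Sigma) (R : automaton Z Sigma) :
  (exists (Y : Type) (S : automaton Y Sigma),
     admissible Suc S G /\ bisimilar (sync S G) R)
  <->
  (exists E : (X * Z -> Prop) -> Prop,
     ctrl_set Suc (fun _ => true) G R E /\
     (forall z, gammaR (bigcup_fam (E0 G R E)) z <-> init R z)).
Proof.
split.
- move=> [Y [S [S_adm [Phi Phi_bisim]]]].
  exists (bisim_family S G Phi); split; first exact: bisim_family_ctrl_set.
  move=> z; split; first exact: gammaR_E0_init.
  exact: init_gammaR_E0_bisim_family.
- move=> [E [E_ctrl E0_gamma]].
  have E0_cover z : init R z -> gammaR (bigcup_fam (E0 G R E)) z by apply: (E0_gamma z).2.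
  exists (X * Z -> Prop)%type, (ctrl_supervisor E0_cover); split.
    exact: ctrl_supervisor_admissible.
  exists (ctrl_bisim E); exact: ctrl_bisim_bisimulation E_ctrl E0_cover.
Qed.
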